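(* Let $F_2$ denote the free group of rank 2. Then the direct product $F_2\times F_2$, and hence any group containing a subgroup isomorphic to $F_2\times F_2$, does not embed in $GL(3,\mathbb{F})$ for any field $\mathbb{F}$. *)

From mathcomp Require Import all_boot all_order all_algebra.
Set Implicit Arguments. Unset Strict Implicit. Unset Printing Implicit Defensive.
Import GRing.Theory.

(* The free group F2 on generators a, b, realized as freely reduced words.
   A letter is (g, e): g = false means generator a, g = true means b;
   e = false means the generator itself, e = true its inverse. *)
Definition letter := (bool * bool)%type.
Definition linv (l : letter) : letter := (l.1, ~~ l.2).

Definition reduced (w : seq letter) : bool :=
  sorted (fun x y => y != linv x) w.

Definition push (x : letter) (w : seq letter) : seq letter :=
  if w is y :: w' then (if y == linv x then w' else x :: w) else [:: x].

Lemma reduced_push x w : reduced w -> reduced (push x w).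
Proof.
case: w => [|y w] //= Hw.
case: ifP => Hy.
  by case: w Hw {Hy} => [|z w] //= /andP[].
by rewrite /reduced /= Hy.
Qed.

Lemma reduced_foldr_push u v : reduced v -> reduced (foldr push v u).
Proof. by elim: u => [|x u IH] //= Hv; apply: reduced_push; apply: IH. Qed.

Definition F2 := {w : seq letter | reduced w}.

Definition F2mul (u v : F2) : F2 :=
  exist _ (foldr push (sval v) (sval u)) (reduced_foldr_push (sval u) (svalP v)).

Definition F2xF2 := (F2 * F2)%type.
Definition F2xF2mul (x y : F2xF2) : F2xF2 := (F2mul x.1 y.1, F2mul x.2 y.2).

Definition embeds_in_GL3 (G : Type) (mul : G -> G -> G) (F : fieldType) : Prop :=
  exists phi : G -> 'M[F]_3,
    [/\ forall g, phi g \in unitmx,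
        forall g h, phi (mul g h) = (phi g *m phi h)%R
      & injective phi].

(* Let A, B and C, D be the images in GL(3, F) of generators a, b and c, d of
   the two factors of F2 x F2.  The centraliser of a matrix with a cyclic
   vector consists of polynomials in it, so a matrix commuting with two
   non-commuting matrices has no cyclic vector; in dimension 3 this makes it a
   scalar plus a rank-one matrix u^T w (some v has v, vX independent, X acts by
   a scalar c on F^3 / <v, vX>, and if X - c had rank 2 it would have a cyclic
   vector).  The commutation relations then give w_i . u_j = 0 between the
   rank-one parts of A, B and of C, D, which forces those of A and B to share
   their column u or their row w.  So A and B fix a common line and K = AB - BA
   is rank one with K M K = 0 for every M fixing it.  For P = [A, B] and
   Q = A P A^-1 this gives (P - 1)(Q - 1) = 0 = (Q - 1)(P - 1), so P and Q
   commute, while [[a, b], a [a, b] a^-1] is nontrivial in F2. *)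

From mathcomp Require Import all_boot all_order all_algebra ring.
Set Implicit Arguments. Unset Strict Implicit. Unset Printing Implicit Defensive.
Import GRing.Theory.
Local Open Scope ring_scope.

Section CommutatorLaw.
Variable R : unitRingType.
Implicit Types a b p q : R.

Definition bracket a b := a * b - b * a.
Definition commutator a b := a * b * a^-1 * b^-1.

Lemma bracketC a b : bracket b a = - bracket a b.
Proof. by rewrite opprB. Qed.

Lemma comm_sub1_mul0 p q :
  (p - 1) * (q - 1) = 0 -> (q - 1) * (p - 1) = 0 -> GRing.comm p q.
Proof.
have mulE (x y : R) : x * y - 1 = (x - 1) * (y - 1) + (x - 1) + (y - 1).
  by rewrite -{2}(mulr1 (x - 1)) -mulrDr subrK mulrBl mul1r addrA subrK.
move=> hpq hqp; rewrite /GRing.comm; apply: (@subIr _ 1).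
by rewrite mulE hpq [RHS]mulE hqp !add0r addrC.
Qed.

(* For P = commutator a b, Q = a P a^-1 and K = bracket a b we have
   P - 1 = K a^-1 b^-1 and Q - 1 = a (P - 1) a^-1, so both products of P - 1
   and Q - 1 contain a factor K m K. *)
Lemma commutator_law a b : a \is a GRing.unit -> b \is a GRing.unit ->
  bracket a b * (a^-1 * b^-1 * a) * bracket a b = 0 ->
  bracket a b * (a^-1 * b^-1 * a^-1) * bracket a b = 0 ->
  GRing.comm (commutator a b) (a * commutator a b * a^-1).
Proof.
move=> ua ub h1 h2; set k := bracket a b in h1 h2.
have eP : commutator a b - 1 = k * a^-1 * b^-1.
  by rewrite /k !mulrBl mulrK // divrr.
have eQ : a * commutator a b * a^-1 - 1 = a * (k * a^-1 * b^-1) * a^-1.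
  by rewrite -eP mulrBr mulrBl mulr1 divrr.
have {}h1 : k * a^-1 * b^-1 * a * k = 0 by rewrite -h1 !mulrA.
have {}h2 : k * a^-1 * b^-1 * a^-1 * k = 0 by rewrite -h2 !mulrA.
apply: comm_sub1_mul0; rewrite eQ eP !mulrA ?h1 ?mul0r //.
have -> : a * k * a^-1 * b^-1 * a^-1 * k = a * (k * a^-1 * b^-1 * a^-1 * k).
  by rewrite !mulrA.
by rewrite h2 mulr0 !mul0r.
Qed.

End CommutatorLaw.

Section Krylov.
Variables (F : fieldType) (n : nat).
Implicit Types (N Y Z : 'M[F]_n.+1) (s : 'rV[F]_n.+1).

Definition krylov_mx N s : 'M[F]_n.+1 := \matrix_(i < n.+1) (s *m N ^+ i).

Lemma krylov_mxMr N Y s : GRing.comm N Y -> krylov_mx N s *m Y = krylov_mx N (s *m Y).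
Proof.
move=> cNY; apply/row_matrixP => i.
by rewrite row_mul !rowK -!mulmxA !mulmxE (commrX i (commr_sym cNY)).
Qed.

Lemma cent_cyclic_horner N s Y : krylov_mx N s \in unitmx -> GRing.comm N Y ->
  exists p, Y = horner_mx N p.
Proof.
move=> cyc cNY; pose c := s *m Y *m invmx (krylov_mx N s).
exists (\sum_i c 0 i *: 'X^i).
have sY : s *m horner_mx N (\sum_i c 0 i *: 'X^i) = s *m Y.
  rewrite rmorph_sum /= mulmx_sumr -[RHS](mulmxKV cyc) -/c [RHS]mulmx_sum_row.
  by apply: eq_bigr => i _; rewrite horner_mxZ rmorphXn /= horner_mx_X rowK scalemxAr.
apply: (can_inj (mulKmx cyc)).
by rewrite !krylov_mxMr ?sY //; exact/comm_mx_horner.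
Qed.

Lemma cyclic_cent_comm N s Y Z : krylov_mx N s \in unitmx ->
  GRing.comm N Y -> GRing.comm N Z -> GRing.comm Y Z.
Proof.
by move=> cyc cNY cNZ; have [p ->] := cent_cyclic_horner cyc cNY; exact: comm_horner_mx.
Qed.

End Krylov.

Section RowSpaces.
Variable F : fieldType.

Lemma mxrank_adds_notsub m n (U : 'M[F]_(m, n)) (s : 'rV_n) :
  ~~ (s <= U)%MS -> \rank (U + s)%MS = (\rank U).+1.
Proof.
move=> sU; apply/eqP; rewrite eqn_leq; apply/andP; split.
  rewrite (leq_trans (mxrank_adds_leqif U s)) //.
  by rewrite -[(\rank U).+1]addn1 leq_add2l rank_rV leq_b1.
by rewrite (ltn_leqif (mxrank_leqif_sup (addsmxSl U s))) addsmx_sub submx_refl.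
Qed.

Lemma stablemx_inv m n (V : 'M[F]_(m, n.+1)) (A : 'M[F]_n.+1) :
  A \is a GRing.unit -> stablemx V A -> stablemx V A^-1.
Proof.
move=> uA sVA; have : (V *m A == V)%MS.
  by rewrite -(eq_leqif (mxrank_leqif_eq sVA)) mxrankMfree ?row_free_unit.
by case/andP => _ /(submxMr A^-1); rewrite -mulmxA mulmxV ?mulmx1.
Qed.

Lemma scalar_or_non_eigenvector n (X : 'M[F]_n.+1) :
  (exists c, X = c%:M) \/ exists v : 'rV_n.+1, ~~ stablemx v X.
Proof.
pose e i : 'rV[F]_n.+1 := delta_mx 0 i.
have [/forallP eig | /forallPn [i]] := boolP [forall i,
   stablemx (e i) X && stablemx (e 0 + e i)%R X]; last first.
  by rewrite negb_and => /orP[] nv; right; [exists (e i) | exists (e 0 + e i)].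
have eigE i : e i *m X = X i i *: e i.
  have /andP[/sub_rVP[a ea] _] := eig i; rewrite ea; congr (_ *: _).
  by move/rowP/(_ i): ea; rewrite /e -rowE !mxE !eqxx mulr1.
left; exists (X 0 0); apply/row_matrixP => i.
rewrite rowE [RHS]rowE mul_mx_scalar -/(e i) eigE; congr (_ *: _).
have /andP[_ /sub_rVP[b]] := eig i; rewrite mulmxDl !eigE => /rowP eb.
case: (eqVneq i 0) => [-> // | i0].
move: (eb 0) (eb i); rewrite /e !mxE !eqxx (negbTE i0) eq_sym (negbTE i0) /=.
by rewrite !(mulr1, mulr0, addr0, add0r) => -> ->.
Qed.

End RowSpaces.

Section OuterProducts.
Variables (F : fieldType) (n : nat).
Implicit Types (u w x y : 'rV[F]_n).

Definition outer u w : 'M[F]_n := u^T *m w.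
Definition dot x y : F := (x *m y^T) 0 0.

Lemma dotE x y : x *m y^T = (dot x y)%:M.
Proof. exact: mx11_scalar. Qed.

Lemma dotC x y : dot x y = dot y x.
Proof. by rewrite /dot -[x *m y^T]trmxK trmx_mul trmxK mxE. Qed.

Lemma dotBr x y z : dot x (y - z) = dot x y - dot x z.
Proof. by rewrite /dot linearB /= mulmxBr !mxE. Qed.

Lemma dotZr a x y : dot x (a *: y) = a * dot x y.
Proof. by rewrite /dot linearZ /= -scalemxAr mxE. Qed.

Lemma dotZl a x y : dot (a *: x) y = a * dot x y.
Proof. by rewrite /dot -scalemxAl mxE. Qed.

Lemma mul_outer x u w : x *m outer u w = dot x u *: w.
Proof. by rewrite /outer mulmxA dotE mul_scalar_mx. Qed.

Lemma outerM u w u' w' : outer u w *m outer u' w' = dot w u' *: outer u w'.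
Proof. by rewrite {1}/outer -mulmxA mul_outer scalemxAr. Qed.

Lemma trmx_outer u w : (outer u w)^T = outer w u.
Proof. by rewrite /outer trmx_mul trmxK. Qed.

Lemma outerZl a u w : outer (a *: u) w = a *: outer u w.
Proof. by rewrite /outer linearZ /= scalemxAl. Qed.

Lemma outerZr a u w : outer u (a *: w) = a *: outer u w.
Proof. by rewrite /outer scalemxAr. Qed.

Lemma outerBl u u' w : outer (u - u') w = outer u w - outer u' w.
Proof. by rewrite /outer linearB /= mulmxBl. Qed.

Lemma outer_eq0 u w : (outer u w == 0) = (u == 0) || (w == 0).
Proof.
have [->|w0] := eqVneq w 0; first by rewrite /outer mulmx0 eqxx orbT.
by rewrite orbF -mxrank_eq0 mxrankMfree ?mxrank_tr ?mxrank_eq0 // /row_free rank_rV w0.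
Qed.

Lemma rank_le1_outer (A : 'M[F]_n) : (\rank A <= 1)%N -> exists u w, A = outer u w.
Proof.
have [->|A0] := eqVneq A 0; first by exists 0, 0; rewrite /outer trmx0 mul0mx.
have r0 : nz_row A != 0 by rewrite nz_row_eq0.
move=> rkA; have /submxP[D ->] : (A <= nz_row A)%MS.
  by rewrite -(geq_leqif (mxrank_leqif_sup (nz_row_sub A))) rank_rV r0.
by exists D^T, (nz_row A); rewrite /outer trmxK.
Qed.

Lemma outer_sub_row x y x' y' z a b :
  a *: outer x y = b *: outer x' y' -> a * dot z x != 0 -> (y <= y')%MS.
Proof.
move=> e nz; move/(congr1 (mulmx z)): e; rewrite -!scalemxAr !mul_outer !scalerA => e.
apply/sub_rVP; exists (b * dot z x' / (a * dot z x)); apply: (scalerI nz).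
by rewrite e scalerA [_ * (_ / _)]mulrC divfK.
Qed.

Lemma outer_commute u w u' w' : u != 0 -> w != 0 -> u' != 0 -> w' != 0 ->
    comm_mx (outer u w) (outer u' w') ->
  (dot w u' = 0 /\ dot w' u = 0) \/ (u' <= u)%MS && (w' <= w)%MS.
Proof.
move=> u0 w0 u'0 w'0; rewrite /comm_mx !outerM => e.
have [a0|a0] := eqVneq (dot w u') 0; have [b0|b0] := eqVneq (dot w' u) 0.
- by left.
- move: e; rewrite a0 scale0r => /esym/eqP.
  by rewrite scalemx_eq0 (negbTE b0) outer_eq0 (negbTE u'0) (negbTE w0).
- move: e; rewrite b0 scale0r => /eqP.
  by rewrite scalemx_eq0 (negbTE a0) outer_eq0 (negbTE u0) (negbTE w'0).
right; apply/andP; split; last by apply: (outer_sub_row (z := w') e); rewrite mulf_neq0.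
have /esym := congr1 trmx e; rewrite !linearZ /= !trmx_outer => et.
by apply: (outer_sub_row (z := u') et); rewrite (dotC u') mulf_neq0.
Qed.

Lemma outer_sandwich y w (M : 'M[F]_n) : dot w y = 0 -> stablemx w M ->
  outer y w *m M *m outer y w = 0.
Proof.
move=> wy /sub_rVP[m wM].
rewrite /outer -(mulmxA y^T w M) wM -scalemxAr -scalemxAl -/(outer y w) outerM.
by rewrite wy !scale0r scaler0.
Qed.

Lemma stablemx_scalar_outer a u w w' : (w' <= w)%MS -> stablemx w (a%:M + outer u w').
Proof. by move=> sw; rewrite stablemxD ?stablemxC // mul_outer scalemx_sub. Qed.

End OuterProducts.

Section NonCyclic.
Variable F : fieldType.
Implicit Types (N X : 'M[F]_3) (s v : 'rV[F]_3).

Lemma krylov_mx_row N s (i : nat) : (i < 3)%N -> (s *m N ^+ i <= krylov_mx N s)%MS.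
Proof. by move=> lti; have := row_sub (Ordinal lti) (krylov_mx N s); rewrite rowK. Qed.

Lemma krylov3_unit N s : \rank (s + s *m N + s *m N *m N)%MS = 3 -> krylov_mx N s \in unitmx.
Proof.
move=> rk3; rewrite -row_full_unit -sub1mx.
apply: submx_trans (_ : (s + s *m N + s *m N *m N <= _)%MS).
  by rewrite sub1mx /row_full rk3.
rewrite !addsmx_sub.
have := krylov_mx_row N s (isT : (0 < 3)%N); rewrite expr0 mulmx1 => ->.
have := krylov_mx_row N s (isT : (1 < 3)%N); rewrite expr1 => ->.
by have := krylov_mx_row N s (isT : (2 < 3)%N); rewrite expr2 -mulmxE mulmxA => ->.
Qed.

Lemma cyclic_of_rank2_image N v : ~~ stablemx v N -> (N <= v + v *m N)%MS ->
  (1 < \rank N)%N -> exists s, krylov_mx N s \in unitmx.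
Proof.
move=> nv sNU rkN; set U := (v + v *m N)%MS.
have v0 : v != 0 by apply: contraNneq nv => ->; rewrite mul0mx sub0mx.
have rkU : \rank U = 2 by rewrite mxrank_adds_notsub // rank_rV v0.
have sUN : (U <= N)%MS by rewrite -(geq_leqif (mxrank_leqif_sup sNU)) rkU.
have /submxP[s0 es0] : (v <= N)%MS := submx_trans (addsmxSl _ _) sUN.
have [z z0 zN] : exists2 z : 'rV_3, z != 0 & z *m N = 0.
  apply/det0P; rewrite -[_ == 0]negbK -unitfE -unitmxE -row_free_unit.
  by apply: contraTneq (mxrankS sNU) => ->; rewrite rkU.
have [s [sN sU]] : exists s, s *m N = v /\ ~~ (s <= U)%MS.
  have [s0U | ] := boolP (s0 <= U)%MS; last by exists s0.
  exists (s0 + z); rewrite mulmxDl zN addr0 -es0; split=> //.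
  (* Otherwise U = <z, s0>, and v = s0 N would be an eigenvector of N. *)
  apply: contra nv => s0zU.
  have zU : (z <= U)%MS by rewrite -(addKr s0 z) addmx_sub // eqmx_opp.
  have zs0 : ~~ (s0 <= z)%MS.
    by apply: contra v0 => /sub_rVP[a e]; rewrite es0 e -scalemxAl zN scaler0.
  have rk2 : \rank (z + s0)%MS = 2 by rewrite mxrank_adds_notsub // rank_rV z0.
  have sUzs : (U <= z + s0)%MS.
    by rewrite -(geq_leqif (mxrank_leqif_sup _)) ?rk2 ?rkU // addsmx_sub zU.
  have /sub_addsmxP[[a b] /= ev] := submx_trans (addsmxSl v (v *m N)) sUzs.
  by rewrite {1}ev mulmxDl -!mulmxA zN mulmx0 add0r -es0 submxMl.
exists s; apply: krylov3_unit.
by rewrite sN -addsmxA addsmxC mxrank_adds_notsub // rkU.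
Qed.

Lemma noncyclic_rank_le1 X v : ~~ stablemx v X ->
    (forall c s, krylov_mx (X - c%:M) s \notin unitmx) ->
  exists c, (\rank (X - c%:M)%R <= 1)%N.
Proof.
move=> nv noncyc; set U := (v + v *m X)%MS.
have v0 : v != 0 by apply: contraNneq nv => ->; rewrite mul0mx sub0mx.
have rkU : \rank U = 2 by rewrite mxrank_adds_notsub // rank_rV v0.
have sX2 : (v *m X *m X <= U)%MS.
  apply: contraR (noncyc 0 v) => nX2; rewrite raddf0 subr0.
  by apply: krylov3_unit; rewrite mxrank_adds_notsub // rkU.
have XU : stablemx U X by rewrite addsmxMr addsmx_sub addsmxSr.
have [w wU] : exists w : 'rV_3, ~~ (w <= U)%MS.
  have /row_subPn[i] : ~~ (1%:M <= U)%MS by rewrite sub1mx /row_full rkU.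
  by exists (row i 1%:M).
have rkUw : \rank (U + w)%MS = 3 by rewrite mxrank_adds_notsub // rkU.
have /sub_addsmxP[[k g] /= ewX] : (w *m X <= U + w)%MS.
  by rewrite submx_full // /row_full rkUw.
(* c is the eigenvalue of X on the quotient line F^3 / U. *)
set c := g 0 0; set N := X - c%:M.
have wN : (w *m N <= U)%MS.
  by rewrite mulmxBr mul_mx_scalar ewX [g]mx11_scalar mul_scalar_mx addrK submxMl.
have sNU : (N <= U)%MS.
  rewrite -[N]mul1mx (submx_trans (submxMr N (_ : 1%:M <= U + w)%MS)) //.
    by rewrite sub1mx /row_full rkUw.
  by rewrite addsmxMr addsmx_sub wN stablemxD // stablemxN stablemxC.
exists c; rewrite leqNgt; apply/negP => rkN.
have vXN : v *m X = v *m N + c *: v by rewrite mulmxBr mul_mx_scalar subrK.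
have nvN : ~~ stablemx v N.
  by apply: contra nv => vN; rewrite vXN addmx_sub // scalemx_sub.
have sNvN : (N <= v + v *m N)%MS.
  apply: submx_trans sNU _.
  by rewrite addsmx_sub addsmxSl vXN addmx_sub ?addsmxSr // scalemx_sub // addsmxSl.
by have [s] := cyclic_of_rank2_image nvN sNvN rkN; apply/negP/noncyc.
Qed.

Lemma cent_noncomm_scalar_outer X Y Z :
    GRing.comm X Y -> GRing.comm X Z -> ~ GRing.comm Y Z ->
  exists c u w, X = c%:M + outer u w.
Proof.
move=> cXY cXZ nYZ.
have noncyc c s : krylov_mx (X - c%:M) s \notin unitmx.
  apply/negP => cyc; apply: nYZ; apply: (cyclic_cent_comm cyc).
    exact/commr_sym/commrB/comm_mx_scalar/commr_sym.
  exact/commr_sym/commrB/comm_mx_scalar/commr_sym.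
have [[c ->]|[v nv]] := scalar_or_non_eigenvector X.
  by exists c, 0, 0; rewrite /outer trmx0 mul0mx addr0.
have [c /rank_le1_outer[u [w e]]] := noncyclic_rank_le1 nv noncyc.
by exists c, u, w; rewrite -e addrC subrK.
Qed.

End NonCyclic.

Section ScalarPlusOuter.
Variables (F : fieldType) (n : nat).
Implicit Types (A B M X Y : 'M[F]_n.+1) (u w : 'rV[F]_n.+1).

Lemma comm_scalar_add a X Y : GRing.comm (a%:M + X) Y <-> GRing.comm X Y.
Proof.
rewrite /GRing.comm mulrDl mulrDr -!mulmxE mul_scalar_mx mul_mx_scalar.
by split=> [/addrI|->].
Qed.

Lemma scalar_outer_neq0 X Y a u w :
  X = a%:M + outer u w -> ~ GRing.comm X Y -> u != 0 /\ w != 0.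
Proof.
move=> -> nc; suff : outer u w != 0 by rewrite outer_eq0 negb_or => /andP.
by apply: contra_not_neq nc => ->; rewrite addr0; exact: comm_scalar_mx.
Qed.

Lemma comm_outer_sub X Y a c u w u' w' : X = a%:M + outer u w ->
  (u' <= u)%MS -> (w' <= w)%MS -> GRing.comm X Y -> GRing.comm (c%:M + outer u' w') Y.
Proof.
move=> -> /sub_rVP[k ->] /sub_rVP[l ->] /comm_scalar_add cOY.
rewrite outerZl outerZr scalerA; apply/comm_scalar_add.
by rewrite /GRing.comm -scalerAl -scalerAr cOY.
Qed.

Lemma orth_of_comm X Z Y a c u w u' w' :
    X = a%:M + outer u w -> Z = c%:M + outer u' w' ->
    u != 0 -> w != 0 -> u' != 0 -> w' != 0 ->
    GRing.comm X Z -> GRing.comm X Y -> ~ GRing.comm Z Y ->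
  dot w u' = 0 /\ dot w' u = 0.
Proof.
move=> eX eZ u0 w0 u'0 w'0 cXZ cXY nZY.
have cO : comm_mx (outer u w) (outer u' w').
  by move: cXZ; rewrite eX eZ => /comm_scalar_add/commr_sym/comm_scalar_add/commr_sym.
case: (outer_commute u0 w0 u'0 w'0 cO) => // /andP[su sw].
by case: nZY; rewrite eZ; exact: comm_outer_sub eX su sw cXY.
Qed.

Lemma bracket_scalar_outer a b u w u' w' :
  bracket (a%:M + outer u w) (b%:M + outer u' w') =
  dot w u' *: outer u w' - dot w' u *: outer u' w.
Proof.
rewrite /bracket !mulrDl !mulrDr -!mulmxE !mul_scalar_mx !mul_mx_scalar !outerM.
rewrite !scale_scalar_mx.
move: (outer u w) (outer u' w') (outer u w') (outer u' w) => O1 O2 O12 O21.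
by apply/matrixP => i j; rewrite !mxE; ring.
Qed.

Lemma trmx_bracket A B : (bracket A B)^T = bracket B^T A^T.
Proof. by rewrite /bracket linearB /= -!mulmxE !trmx_mul. Qed.

Lemma trmx_scalar_outer a u w : (a%:M + outer u w)^T = a%:M + outer w u.
Proof. by rewrite linearD /= tr_scalar_mx trmx_outer. Qed.

Lemma bracket_sandwich_row A B a b u w u' w' M :
    A = a%:M + outer u w -> B = b%:M + outer u' w' -> (w' <= w)%MS -> stablemx w M ->
  bracket A B *m M *m bracket A B = 0.
Proof.
move=> -> -> /sub_rVP[k ->] wM.
rewrite bracket_scalar_outer outerZr scalerA -!outerZl -outerBl.
by apply: outer_sandwich wM; rewrite dotBr !dotZr dotZl; ring.
Qed.

Lemma bracket_sandwich_col A B a b u w u' w' M :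
    A = a%:M + outer u w -> B = b%:M + outer u' w' -> (u' <= u)%MS -> stablemx u M^T ->
  bracket A B *m M *m bracket A B = 0.
Proof.
move=> -> -> su uM; apply: trmx_inj.
rewrite trmx0 !trmx_mul mulmxA trmx_bracket bracketC mulmxN !mulNmx opprK.
by rewrite !trmx_scalar_outer (bracket_sandwich_row erefl erefl su uM).
Qed.

Lemma law_of_scalar_outer A B a b u w u' w' : A \in unitmx -> B \in unitmx ->
    A = a%:M + outer u w -> B = b%:M + outer u' w' -> (u' <= u)%MS || (w' <= w)%MS ->
  GRing.comm (commutator A B) (A * commutator A B * A^-1).
Proof.
move=> uA uB eA eB hline.
suff [S [SA SAi SBi SM S0]] : exists S : pred 'M[F]_n.+1,
    [/\ A \in S, A^-1 \in S, B^-1 \in S, {in S &, forall M N, M * N \in S}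
      & {in S, forall M, bracket A B * M * bracket A B = 0}].
  by apply: commutator_law => //; apply: S0; rewrite !SM.
case/orP: hline => [su|sw].
  have stA : stablemx u A^T by rewrite eA trmx_scalar_outer stablemx_scalar_outer.
  have stB : stablemx u B^T by rewrite eB trmx_scalar_outer stablemx_scalar_outer.
  exists [pred M | stablemx u M^T]; split=> [||| M N ? ? | M ?]; rewrite ?inE ?trmxV.
  - exact: stA.
  - by apply: stablemx_inv; rewrite ?unitr_trmx.
  - by apply: stablemx_inv; rewrite ?unitr_trmx.
  - by rewrite -mulmxE trmx_mul; exact: stablemxM.
  - by rewrite -!mulmxE; exact: bracket_sandwich_col eA eB su _.
have stA : stablemx w A by rewrite eA stablemx_scalar_outer.
have stB : stablemx w B by rewrite eB stablemx_scalar_outer.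
exists [pred M | stablemx w M]; split=> [||| M N ? ? | M ?]; rewrite ?inE.
- exact: stA.
- exact: stablemx_inv.
- exact: stablemx_inv.
- by rewrite -mulmxE; exact: stablemxM.
- by rewrite -!mulmxE; exact: bracket_sandwich_row eA eB sw _.
Qed.

End ScalarPlusOuter.

Section GL3.
Variable F : fieldType.
Implicit Types (A B C D : 'M[F]_3) (u w : 'rV[F]_3).

Lemma orth_parallel u1 u2 w w' : u1 != 0 -> ~~ (u2 <= u1)%MS -> w != 0 ->
    dot w u1 = 0 -> dot w u2 = 0 -> dot w' u1 = 0 -> dot w' u2 = 0 ->
  (w' <= w)%MS.
Proof.
move=> u10 u21 w0 wu1 wu2 w'u1 w'u2; set K := kermx (col_mx u1 u2)^T.
have inK x : dot x u1 = 0 -> dot x u2 = 0 -> (x <= K)%MS.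
  by move=> x1 x2; rewrite sub_kermx tr_col_mx mul_mx_row !dotE x1 x2 raddf0 row_mx0.
have rkK : \rank K = 1.
  by rewrite mxrank_ker mxrank_tr -addsmxE mxrank_adds_notsub // rank_rV u10.
have sKw : (K <= w)%MS.
  by rewrite -(geq_leqif (mxrank_leqif_sup (inK w wu1 wu2))) rkK rank_rV w0.
exact: submx_trans (inK w' w'u1 w'u2) sKw.
Qed.

Lemma common_line u1 u2 u3 u4 w1 w2 w3 w4 :
    u1 != 0 -> u3 != 0 -> w1 != 0 -> w3 != 0 ->
    dot w1 u3 = 0 -> dot w1 u4 = 0 -> dot w2 u3 = 0 -> dot w2 u4 = 0 ->
    dot w3 u1 = 0 -> dot w3 u2 = 0 -> dot w4 u1 = 0 -> dot w4 u2 = 0 ->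
    ~~ ((u4 <= u3)%MS && (w4 <= w3)%MS) ->
  (u2 <= u1)%MS || (w2 <= w1)%MS.
Proof.
move=> u10 u30 w10 w30 o13 o14 o23 o24 o31 o32 o41 o42 n34.
have [//|u21] := boolP (u2 <= u1)%MS.
have w43 : (w4 <= w3)%MS by apply: (orth_parallel u10 u21).
have u43 : ~~ (u4 <= u3)%MS by apply: contra n34 => ->.
by rewrite (orth_parallel u30 u43 w10).
Qed.

Lemma commuting_pairs_common_line A B C D :
    GRing.comm A C -> GRing.comm A D -> GRing.comm B C -> GRing.comm B D ->
    ~ GRing.comm A B -> ~ GRing.comm C D ->
  exists a b u w u' w', [/\ A = a%:M + outer u w, B = b%:M + outer u' w'
                          & (u' <= u)%MS || (w' <= w)%MS].
Proof.
move=> cAC cAD cBC cBD nAB nCD.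
have nBA : ~ GRing.comm B A by move/commr_sym.
have nDC : ~ GRing.comm D C by move/commr_sym.
have [a1 [u1 [w1 eA]]] := cent_noncomm_scalar_outer cAC cAD nCD.
have [a2 [u2 [w2 eB]]] := cent_noncomm_scalar_outer cBC cBD nCD.
have [a3 [u3 [w3 eC]]] := cent_noncomm_scalar_outer (commr_sym cAC) (commr_sym cBC) nAB.
have [a4 [u4 [w4 eD]]] := cent_noncomm_scalar_outer (commr_sym cAD) (commr_sym cBD) nAB.
have [u10 w10] := scalar_outer_neq0 eA nAB.
have [u20 w20] := scalar_outer_neq0 eB nBA.
have [u30 w30] := scalar_outer_neq0 eC nCD.
have [u40 w40] := scalar_outer_neq0 eD nDC.
have [o13 o31] := orth_of_comm eA eC u10 w10 u30 w30 cAC cAD nCD.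
have [o14 o41] := orth_of_comm eA eD u10 w10 u40 w40 cAD cAC nDC.
have [o23 o32] := orth_of_comm eB eC u20 w20 u30 w30 cBC cBD nCD.
have [o24 o42] := orth_of_comm eB eD u20 w20 u40 w40 cBD cBC nDC.
have n34 : ~~ ((u4 <= u3)%MS && (w4 <= w3)%MS).
  apply/negP => /andP[su sw]; apply: nDC; rewrite eD.
  exact: comm_outer_sub eC su sw (commr_refl C).
exists a1, a2, u1, w1, u2, w2; split=> //.
exact: common_line u10 u30 w10 w30 o13 o14 o23 o24 o31 o32 o41 o42 n34.
Qed.

Lemma GL3_commutator_law A B C D : A \in unitmx -> B \in unitmx ->
    GRing.comm A C -> GRing.comm A D -> GRing.comm B C -> GRing.comm B D ->
    ~ GRing.comm A B -> ~ GRing.comm C D ->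
  GRing.comm (commutator A B) (A * commutator A B * A^-1).
Proof.
move=> uA uB cAC cAD cBC cBD nAB nCD.
have [a [b [u [w [u' [w' [eA eB hline]]]]]]] :=
  commuting_pairs_common_line cAC cAD cBC cBD nAB nCD.
exact: law_of_scalar_outer uA uB eA eB hline.
Qed.

End GL3.

Definition F2one : F2 := exist _ [::] isT.
Definition F2gen (l : letter) : F2 := exist _ [:: l] isT.

Definition g1 : F2xF2 := (F2one, F2one).
Definition ga : F2xF2 := (F2gen (false, false), F2one).
Definition gaV : F2xF2 := (F2gen (false, true), F2one).
Definition gb : F2xF2 := (F2gen (true, false), F2one).
Definition gbV : F2xF2 := (F2gen (true, true), F2one).
Definition gc : F2xF2 := (F2one, F2gen (false, false)).
Definition gd : F2xF2 := (F2one, F2gen (true, false)).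

Local Notation mul := F2xF2mul.

Definition gP := mul (mul (mul ga gb) gaV) gbV.
Definition gPV := mul (mul (mul gb ga) gbV) gaV.
Definition gQ := mul (mul ga gP) gaV.
Definition gQV := mul (mul ga gPV) gaV.
Definition gW := mul (mul (mul gP gQ) gPV) gQV.

Lemma F2xF2_inverses :
  [/\ mul g1 g1 = g1, mul gaV ga = g1, mul gbV gb = g1, mul gPV gP = g1 & mul gQV gQ = g1].
Proof. by split; apply/eqP. Qed.

Lemma F2xF2_commuting :
  [/\ mul ga gc = mul gc ga, mul ga gd = mul gd ga, mul gb gc = mul gc gb
    & mul gb gd = mul gd gb].
Proof. by split; apply/eqP. Qed.

Lemma F2xF2_noncommuting : mul ga gb <> mul gb ga /\ mul gc gd <> mul gd gc.
Proof. by split; apply/eqP. Qed.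

Lemma gW_neq1 : gW <> g1.
Proof. exact/eqP. Qed.

Section Embedding.
Variables (F : fieldType) (phi : F2xF2 -> 'M[F]_3).
Hypotheses (phi_unit : forall g, phi g \in unitmx)
  (phiM : forall g h, phi (mul g h) = phi g * phi h) (phi_inj : injective phi).

Lemma phi1 : phi g1 = 1.
Proof.
have [e11 _ _ _ _] := F2xF2_inverses.
by apply: (mulrI (phi_unit g1)); rewrite -phiM e11 mulr1.
Qed.

Lemma phiV g h : mul h g = g1 -> phi h = (phi g)^-1.
Proof. by move=> e; apply: (mulIr (phi_unit g)); rewrite -phiM e phi1 mulVr ?phi_unit. Qed.

Lemma phi_comm g h : mul g h = mul h g -> GRing.comm (phi g) (phi h).
Proof. by move=> e; rewrite /GRing.comm -!phiM e. Qed.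

Lemma phi_noncomm g h : mul g h <> mul h g -> ~ GRing.comm (phi g) (phi h).
Proof. by move=> ne c; apply/ne/phi_inj; rewrite !phiM. Qed.

Lemma phi_gW : phi gW = 1.
Proof.
have [_ ea eb eP eQ] := F2xF2_inverses.
have [cac cad cbc cbd] := F2xF2_commuting.
have [nab ncd] := F2xF2_noncommuting.
have law := GL3_commutator_law (phi_unit ga) (phi_unit gb)
  (phi_comm cac) (phi_comm cad) (phi_comm cbc) (phi_comm cbd)
  (phi_noncomm nab) (phi_noncomm ncd).
have phiP : phi gP = commutator (phi ga) (phi gb).
  by rewrite !phiM (phiV ea) (phiV eb).
(* Rewrites with [phiM] are counted: it would also unfold gP and gQ. *)
have phiQ : phi gQ = phi ga * phi gP * (phi ga)^-1 by rewrite 2!phiM (phiV ea).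
have cPQ : GRing.comm (phi gP) (phi gQ) by rewrite phiQ phiP.
by rewrite 3!phiM (phiV eP) (phiV eQ) cPQ mulrK ?divrr ?phi_unit.
Qed.

End Embedding.

Theorem corollary2p4 (F : fieldType) : ~ embeds_in_GL3 F2xF2mul F.
Proof.
case=> phi [phi_unit phiM phi_inj]; apply/gW_neq1/phi_inj.
by rewrite phi_gW // phi1.
Qed.
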